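(* No deterministic strategyproof mechanism for locating an obnoxious facility on $[0,1]$ has an approximation ratio better than $(2^p+1)^{1/p}$ for the $L_p$ social cost, for any $1\le p<\infty$. No deterministic strategyproof mechanism has an approximation ratio better than $2$ for the $L_\infty$ social cost.
   Context: Agents $i=1,\dots,n$ have private locations $x_i\in[0,1]$; a deterministic mechanism $f:[0,1]^n\to[0,1]$ outputs the facility location. Agent cost $c(x_i,y)=1-|x_i-y|$ (equivalently utility $|x_i-y|$). $f$ is strategyproof if for all $\mathbf x$, $i$, $x_i'$: $|x_i-f(\mathbf x)|\ge|x_i-f(x_i',\mathbf x_{-i})|$. $L_p$ social cost $\mathrm{sc}_p(y,\mathbf x)=(\sum_ic(x_i,y)^p)^{1/p}$, $\mathrm{sc}_\infty(y,\mathbf x)=\max_ic(x_i,y)$. $f$ has approximation ratio $\alpha$ if $\mathrm{sc}_p(f(\mathbf x),\mathbf x)\le\alpha\min_{z\in[0,1]}\mathrm{sc}_p(z,\mathbf x)$ for all profiles (over all numbers of agents). *)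

From HB Require Import structures.
From mathcomp Require Import all_boot all_order all_algebra.
From mathcomp Require Import all_classical all_reals all_analysis.
Set Implicit Arguments. Unset Strict Implicit. Unset Printing Implicit Defensive.
Import Order.TTheory GRing.Theory Num.Theory.
Local Open Scope ring_scope.

(* A deterministic mechanism: for every number n of agents, a map from
   location profiles ('I_n -> R) to a facility location. Only profiles in
   [0,1]^n matter. *)
Definition mechanism (R : realType) := forall n : nat, ('I_n -> R) -> R.

Definition in01 (R : realType) (y : R) : Prop := 0 <= y <= 1.

Definition profile01 (R : realType) (n : nat) (x : 'I_n -> R) : Prop :=
  forall i, in01 (x i).

Definition valid_mech (R : realType) (f : mechanism R) : Prop :=
  forall n (x : 'I_n -> R), profile01 x -> in01 (f n x).

Definition upd (R : realType) (n : nat) (x : 'I_n -> R) (i : 'I_n) (y : R)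
  : 'I_n -> R := fun j => if j == i then y else x j.

Definition strategyproof (R : realType) (f : mechanism R) : Prop :=
  forall n (x : 'I_n -> R) (i : 'I_n) (x' : R),
    profile01 x -> in01 x' ->
    `|x i - f n (upd x i x')| <= `|x i - f n x|.

Definition cost (R : realType) (xi y : R) : R := 1 - `|xi - y|.

Definition sc_p (R : realType) (p : R) (n : nat) (y : R) (x : 'I_n -> R) : R :=
  (\sum_(i < n) (cost (x i) y) `^ p) `^ p^-1.

Definition sc_inf (R : realType) (n : nat) (y : R) (x : 'I_n -> R) : R :=
  \big[Num.max/0]_(i < n) cost (x i) y.

(* approximation ratio alpha (for all numbers of agents, all profiles):
   sc(f x, x) <= alpha * min_{z in [0,1]} sc(z, x), written pointwise in z *)
Definition approx_ratio (R : realType) (sc : forall n, R -> ('I_n -> R) -> R)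
  (f : mechanism R) (alpha : R) : Prop :=
  forall n (x : 'I_n -> R), profile01 x ->
    forall z, in01 z -> sc n (f n x) x <= alpha * sc n z x.

From HB Require Import structures.
From mathcomp Require Import all_boot all_order all_algebra.
From mathcomp Require Import all_classical all_reals all_analysis.
From mathcomp Require Import lra.
Import Order.TTheory GRing.Theory Num.Theory.
Local Open Scope ring_scope.

(* Two agents suffice, and the social cost of a two-agent profile is a
   symmetric, monotone, positively homogeneous function Phi of the two costs.
   At the profiles (0,0) and (1,1) some location costs nothing, so the
   mechanism must be at 1, resp. 0.  Put u = (1+t)/2 and v = (1-t)/2.
   Strategyproofness against (0,0) and (1,1) leaves f(u,0) in {1} u [0,t] and
   f(1,v) in {0} u [1-t,1].  If f(u,0) = 1 and f(1,v) = 0, the agent at v in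
   (u,v) forces f(u,v) = 1 while the agent at u forces f(u,v) = 0.  Otherwise
   the facility costs at least (1-t, (1-t)/2), while the far endpoint costs
   (0, (1+t)/2), so (1-t) Phi(1,1/2) <= alpha (1+t) Phi(0,1/2).  Letting t go
   to 0 gives alpha >= Phi(1,1/2) / Phi(0,1/2), which is (2^p+1)^(1/p) for
   L_p and 2 for L_oo. *)

Lemma ler_of_forall_1pm (R : realFieldType) (a b : R) :
  (forall t, 0 < t < 1 -> (1 - t) * a <= (1 + t) * b) -> a <= b.
Proof.
move=> H; rewrite leNgt; apply/negP; rewrite -subr_gt0 => ba.
have den0 : 0 < 2 * (a - b) + `|a + b| by have := normr_ge0 (a + b); lra.
(* chosen so that t (a + b) <= t |a + b| < a - b *)
pose t := (a - b) / (2 * (a - b) + `|a + b|).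
have tden : t * (2 * (a - b) + `|a + b|) = a - b by rewrite mulfVK ?gt_eqF.
have t0 : 0 < t by exact: divr_gt0.
have t1 : t < 1 by rewrite ltr_pdivrMr //; have := normr_ge0 (a + b); lra.
have tabs : t * (a + b) <= t * `|a + b|.
  by apply: ler_wpM2l; [exact: ltW | exact: ler_norm].
have /H Ht : 0 < t < 1 by rewrite t0 t1.
have := mulr_gt0 t0 (ba : 0 < a - b); lra.
Qed.

Section Cost.
Context {R : realType}.
Implicit Types a y : R.

Lemma dist_le a y : a <= y -> `|a - y| = y - a.
Proof. by move=> ay; rewrite distrC ger0_norm ?subr_ge0. Qed.

Lemma dist_ge a y : y <= a -> `|a - y| = a - y.
Proof. by move=> ya; rewrite ger0_norm ?subr_ge0. Qed.

Lemma cost_le a y : a <= y -> cost a y = 1 - (y - a).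
Proof. by move=> ay; rewrite /cost dist_le. Qed.

Lemma cost_ge a y : y <= a -> cost a y = 1 - (a - y).
Proof. by move=> ya; rewrite /cost dist_ge. Qed.

Lemma cost0l y : 0 <= y -> cost 0 y = 1 - y.
Proof. by move=> y0; rewrite cost_le ?subr0. Qed.

Lemma cost1l y : y <= 1 -> cost 1 y = y.
Proof. by move=> y1; rewrite cost_ge // opprB addrC subrK. Qed.

Lemma cost0r a : 0 <= a -> cost a 0 = 1 - a.
Proof. by move=> a0; rewrite cost_ge ?subr0. Qed.

Lemma cost1r a : a <= 1 -> cost a 1 = a.
Proof. by move=> a1; rewrite cost_le // opprB addrC subrK. Qed.

Lemma in01_0 : in01 (0 : R).
Proof. by rewrite /in01 lexx ler01. Qed.

Lemma in01_1 : in01 (1 : R).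
Proof. by rewrite /in01 ler01 lexx. Qed.

End Cost.

Definition pair_profile {R : realType} (a b : R) : 'I_2 -> R :=
  fun j => if j == ord0 then a else b.

Lemma pair_profile01 {R : realType} {a b : R} :
  in01 a -> in01 b -> profile01 (pair_profile a b).
Proof. by move=> ha hb j; rewrite /pair_profile; case: (j == ord0). Qed.

Lemma upd_pair_profile_fst {R : realType} (a b a' : R) :
  upd (pair_profile a b) ord0 a' = pair_profile a' b.
Proof. by apply: funext => j; rewrite /upd /pair_profile; case: (j == ord0). Qed.

Lemma upd_pair_profile_snd {R : realType} (a b b' : R) :
  upd (pair_profile a b) ord_max b' = pair_profile a b'.
Proof. by apply: funext => -[[|[|k]] Hk]. Qed.

Section TwoAgents.
Context {R : realType} {f : mechanism R} {alpha : R}.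
Context {sc : forall n, R -> ('I_n -> R) -> R} {Phi : R -> R -> R}.
Hypotheses (f_valid : valid_mech f) (f_sp : strategyproof f).
Hypothesis f_approx : approx_ratio sc f alpha.
Hypothesis sc_pair : forall a b y,
  sc 2 y (pair_profile a b) = Phi (cost a y) (cost b y).
Hypothesis PhiC : forall a b, Phi a b = Phi b a.
Hypothesis PhiZ : forall l a b, 0 <= l -> 0 <= a -> 0 <= b ->
  Phi (l * a) (l * b) = l * Phi a b.
Hypothesis Phi_le : forall a b a' b',
  0 <= a -> a <= a' -> 0 <= b -> b <= b' -> Phi a b <= Phi a' b'.
Hypothesis Phi_diag_gt0 : forall c, 0 < c -> 0 < Phi c c.

Let F a b := f 2 (pair_profile a b).

Lemma F_in01 {a b} : in01 a -> in01 b -> in01 (F a b).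
Proof. by move=> ha hb; apply/f_valid/pair_profile01. Qed.

Lemma F_sp_fst {a a' b} : in01 a -> in01 a' -> in01 b ->
  `|a - F a' b| <= `|a - F a b|.
Proof.
move=> ha ha' hb; have := f_sp _ _ ord0 a' (pair_profile01 ha hb) ha'.
by rewrite upd_pair_profile_fst.
Qed.

Lemma F_sp_snd {a b b'} : in01 a -> in01 b -> in01 b' ->
  `|b - F a b'| <= `|b - F a b|.
Proof.
move=> ha hb hb'; have := f_sp _ _ ord_max b' (pair_profile01 ha hb) hb'.
by rewrite upd_pair_profile_snd.
Qed.

Lemma F_approx {a b z} : in01 a -> in01 b -> in01 z ->
  Phi (cost a (F a b)) (cost b (F a b)) <= alpha * Phi (cost a z) (cost b z).
Proof.
move=> ha hb hz; rewrite -!sc_pair.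
by apply: f_approx => //; apply: pair_profile01.
Qed.

Lemma Phi00 : Phi 0 0 = 0.
Proof. by have := PhiZ 0 0 0 (lexx _) (lexx _) (lexx _); rewrite !mul0r. Qed.

Lemma F_diag_cost_le0 {a z} : in01 a -> in01 z -> cost a z = 0 ->
  cost a (F a a) <= 0.
Proof.
move=> ha hz az0; have := F_approx ha ha hz; rewrite az0 Phi00 mulr0.
by apply: contraTT; rewrite -!ltNge; apply: Phi_diag_gt0.
Qed.

Lemma F00 : F 0 0 = 1.
Proof.
have /andP[F0 F1] := F_in01 in01_0 in01_0.
have := F_diag_cost_le0 in01_0 in01_1.
rewrite !cost0l ?ler01 ?subrr // => /(_ erefl); lra.
Qed.

Lemma F11 : F 1 1 = 0.
Proof.
have /andP[F0 F1] := F_in01 in01_1 in01_1.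
have := F_diag_cost_le0 in01_1 in01_0.
rewrite !cost1l ?ler01 // => /(_ erefl); lra.
Qed.

Section Perturbation.
Context {t : R}.
(* lra ignores section hypotheses, hence the local [case/andP: t01] below. *)
Hypothesis t01 : 0 < t < 1.
Let u := (1 + t) / 2.
Let v := (1 - t) / 2.

Let in01_u : in01 u.
Proof. by case/andP: t01 => *; rewrite /in01 /u; apply/andP; split; lra. Qed.

Let in01_v : in01 v.
Proof. by case/andP: t01 => *; rewrite /in01 /v; apply/andP; split; lra. Qed.

Lemma Phi_ge_scaled c1 c2 : 1 - t <= c1 -> v <= c2 ->
  (1 - t) * Phi 1 (1/2) <= Phi c1 c2.
Proof.
case/andP: t01 => t0 t1 h1 h2; rewrite -PhiZ; [|lra|lra|lra].
by apply: Phi_le; rewrite /v in h2; lra.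
Qed.

Lemma Phi_0_u : Phi 0 u = (1 + t) * Phi 0 (1/2).
Proof.
case/andP: t01 => t0 t1.
have -> : u = (1 + t) * (1/2) by rewrite /u; lra.
by rewrite -PhiZ ?mulr0 //; lra.
Qed.

Lemma perturbed_bound_of_costs c1 c2 : 1 - t <= c1 -> v <= c2 ->
  Phi c1 c2 <= alpha * Phi 0 u ->
  (1 - t) * Phi 1 (1/2) <= (1 + t) * (alpha * Phi 0 (1/2)).
Proof.
move=> h1 h2 h; rewrite mulrCA -Phi_0_u.
by apply: le_trans h; apply: Phi_ge_scaled.
Qed.

Lemma Fu0_eq1_or_bound : F u 0 = 1 \/
  (1 - t) * Phi 1 (1/2) <= (1 + t) * (alpha * Phi 0 (1/2)).
Proof.
case/andP: t01 => t0 t1; have /andP[X0 X1] := F_in01 in01_u in01_0.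
have := F_sp_fst in01_u in01_0 in01_0.
rewrite F00 dist_le ?ler_normr; last by rewrite /u; lra.
case/orP => hX; [right | by left; rewrite /u in hX; lra].
apply: (@perturbed_bound_of_costs (cost 0 (F u 0)) (cost u (F u 0))).
- by rewrite cost0l //; rewrite /u in hX; lra.
- by rewrite cost_ge; rewrite /u /v in hX *; lra.
- have := F_approx in01_u in01_0 in01_1.
  rewrite PhiC [Phi (cost u 1) _]PhiC (cost1r u) ?cost0l ?subrr //.
  by rewrite /u; lra.
Qed.

Lemma F1v_eq0_or_bound : F 1 v = 0 \/
  (1 - t) * Phi 1 (1/2) <= (1 + t) * (alpha * Phi 0 (1/2)).
Proof.
case/andP: t01 => t0 t1; have /andP[Y0 Y1] := F_in01 in01_1 in01_v.
have := F_sp_snd in01_1 in01_v in01_1.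
rewrite F11 dist_ge ?ler_normr; last by rewrite /v; lra.
case/orP => hY; [by left; lra | right].
apply: (@perturbed_bound_of_costs (cost 1 (F 1 v)) (cost v (F 1 v))).
- by rewrite cost1l //; rewrite /v in hY; lra.
- by rewrite cost_le; rewrite /v in hY *; lra.
- have := F_approx in01_1 in01_v in01_0.
  have -> : u = 1 - v by rewrite /u /v; lra.
  by rewrite !cost1l ?ler01 // (cost0r v) //; rewrite /v; lra.
Qed.

Lemma Fu0_eq1_F1v_eq0_false : F u 0 = 1 -> F 1 v = 0 -> False.
Proof.
case/andP: t01 => t0 t1 Fu0 F1v; have /andP[Z0 Z1] := F_in01 in01_u in01_v.
have := F_sp_snd in01_u in01_v in01_0; have := F_sp_fst in01_u in01_1 in01_v.
by rewrite Fu0 F1v (dist_ge u 0) ?(dist_le v 1) ?ler_normr /u /v; lra.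
Qed.

Lemma perturbed_bound :
  (1 - t) * Phi 1 (1/2) <= (1 + t) * (alpha * Phi 0 (1/2)).
Proof.
case: Fu0_eq1_or_bound => [Fu0|//]; case: F1v_eq0_or_bound => [F1v|//].
by case: (Fu0_eq1_F1v_eq0_false Fu0 F1v).
Qed.

End Perturbation.

Lemma two_agent_bound : Phi 1 (1/2) <= alpha * Phi 0 (1/2).
Proof. by apply: ler_of_forall_1pm => t; apply: perturbed_bound. Qed.

End TwoAgents.

Section Norms.
Context {R : realType}.
Implicit Types p a b c l : R.

Definition lpnorm2 p a b : R := (a `^ p + b `^ p) `^ p^-1.

Definition linfnorm2 a b : R := Num.max a (Num.max b 0).

Lemma sc_p_pair p a b y :
  sc_p p y (pair_profile a b) = lpnorm2 p (cost a y) (cost b y).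
Proof. by rewrite /sc_p /lpnorm2 !big_ord_recl big_ord0 addr0. Qed.

Lemma sc_inf_pair a b y :
  sc_inf y (pair_profile a b) = linfnorm2 (cost a y) (cost b y).
Proof. by rewrite /sc_inf /linfnorm2 !big_ord_recl big_ord0. Qed.

Lemma lpnorm2C p a b : lpnorm2 p a b = lpnorm2 p b a.
Proof. by rewrite /lpnorm2 addrC. Qed.

Lemma lpnorm2Z p : p != 0 -> forall l a b, 0 <= l -> 0 <= a -> 0 <= b ->
  lpnorm2 p (l * a) (l * b) = l * lpnorm2 p a b.
Proof.
move=> p0 l a b l0 a0 b0; rewrite /lpnorm2 !powRM // -mulrDr.
rewrite powRM ?addr_ge0 ?powR_ge0 //.
by rewrite -powRrM mulfV // powRr1.
Qed.

Lemma lpnorm2_le p : 0 <= p -> forall a b a' b',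
  0 <= a -> a <= a' -> 0 <= b -> b <= b' -> lpnorm2 p a b <= lpnorm2 p a' b'.
Proof.
move=> p0 a b a' b' a0 aa' b0 bb'.
apply: ge0_ler_powR; rewrite ?invr_ge0 ?nnegrE ?addr_ge0 ?powR_ge0 //.
apply: lerD; apply: ge0_ler_powR; rewrite ?nnegrE //.
- exact: le_trans aa'.
- exact: le_trans bb'.
Qed.

Lemma lpnorm2_diag_gt0 p c : 0 < c -> 0 < lpnorm2 p c c.
Proof. by move=> c0; rewrite /lpnorm2 powR_gt0 // addr_gt0 // powR_gt0. Qed.

Lemma lpnorm2_0_half p : p != 0 -> lpnorm2 p 0 (1/2) = 1/2.
Proof.
move=> p0; rewrite -[0](mulr0 (1/2)) -[1/2 in X in lpnorm2 p _ X](mulr1 (1/2)).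
rewrite lpnorm2Z ?ler01 //.
by rewrite /lpnorm2 powR0 // powR1 add0r powR1 mulr1.
Qed.

Lemma lpnorm2_1_half p : p != 0 -> 2 * lpnorm2 p 1 (1/2) = (2 `^ p + 1) `^ p^-1.
Proof.
move=> p0; rewrite -lpnorm2Z ?ler01 ?ler0n //.
have -> : 2 * (1/2) = 1 :> R by lra.
by rewrite mulr1 /lpnorm2 powR1.
Qed.

Lemma linfnorm2_nneg a b : 0 <= b -> linfnorm2 a b = Num.max a b.
Proof. by move=> b0; rewrite /linfnorm2 (max_l b0). Qed.

Lemma linfnorm2C a b : linfnorm2 a b = linfnorm2 b a.
Proof. by rewrite /linfnorm2 maxCA. Qed.

Lemma linfnorm2Z l a b : 0 <= l -> 0 <= a -> 0 <= b ->
  linfnorm2 (l * a) (l * b) = l * linfnorm2 a b.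
Proof. by move=> l0 a0 b0; rewrite !linfnorm2_nneg ?mulr_ge0 // maxr_pMr. Qed.

Lemma linfnorm2_le a b a' b' : 0 <= a -> a <= a' -> 0 <= b -> b <= b' ->
  linfnorm2 a b <= linfnorm2 a' b'.
Proof.
move=> a0 aa' b0 bb'; rewrite !linfnorm2_nneg //; last exact: le_trans bb'.
by rewrite ge_max !le_max aa' bb' orbT.
Qed.

Lemma linfnorm2_diag_gt0 c : 0 < c -> 0 < linfnorm2 c c.
Proof. by move=> c0; rewrite linfnorm2_nneg ?ltW // maxxx. Qed.

End Norms.

Theorem theorem11 (R : realType) :
  (forall (p : R), 1 <= p ->
     forall (f : mechanism R) (alpha : R),
       valid_mech f -> strategyproof f ->
       approx_ratio (sc_p p) f alpha ->
       (2 `^ p + 1) `^ p^-1 <= alpha)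
  /\
  (forall (f : mechanism R) (alpha : R),
       valid_mech f -> strategyproof f ->
       approx_ratio (@sc_inf R) f alpha ->
       2 <= alpha).
Proof.
split=> [p p1 f alpha f_valid f_sp f_approx | f alpha f_valid f_sp f_approx].
- have p0 : 0 < p by lra.
  have pn0 : p != 0 := lt0r_neq0 p0.
  have := two_agent_bound f_valid f_sp f_approx (sc_p_pair p) (lpnorm2C p)
    (lpnorm2Z p pn0) (lpnorm2_le p (ltW p0)) (@lpnorm2_diag_gt0 _ p).
  rewrite -(lpnorm2_1_half p pn0) (lpnorm2_0_half p pn0); lra.
- have := two_agent_bound f_valid f_sp f_approx sc_inf_pair linfnorm2C
    linfnorm2Z linfnorm2_le linfnorm2_diag_gt0.
  have half0 : (0 : R) <= 1/2 by lra.
  have half1 : (1/2 : R) <= 1 by lra.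
  rewrite !linfnorm2_nneg // (max_l half1) (max_r half0); lra.
Qed.
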